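(* Assume $A_n$ satisfies (C1) and (C2), and let $(\beta_0,B_0)\in\Theta$. Then there exists $\delta>0$ such that $$\limsup_{n\to\infty}\frac1n\log\mathbb P_{n,\beta_0,B_0}\Big(\Big|\sum_{i=1}^nX_im_i(\mathbf X)\Big|<n\delta\Big)<0.$$
   Context: For each $n$, $A_n$ is a known symmetric $n\times n$ matrix with non-negative entries and zero diagonal. The Ising model is $\mathbb P_{n,\beta,B}(\mathbf X=\mathbf x)=Z_n(\beta,B)^{-1}\exp(\frac{\beta}{2}\mathbf x^\top A_n\mathbf x+B\sum_i x_i)$ on $\{-1,1\}^n$. (C1): there is a constant $\gamma<\infty$ with $\max_{i}\sum_{j}A_n(i,j)\le\gamma$ for all $n$; (C2): $\liminf_n\frac1n\sum_{i,j}A_n(i,j)>0$. $\Theta=\{(\beta,B):\beta>0,B\ne0\}$. $m_i(\mathbf x)=\sum_jA_n(i,j)x_j$. *)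

From Stdlib Require Import Reals List.
Import ListNotations.
Open Scope R_scope.

Fixpoint rsum (n : nat) (f : nat -> R) : R :=
  match n with
  | O => 0
  | S k => rsum k f + f k
  end.

(* All spin configurations of length n, encoded as lists of booleans
   (true = spin +1, false = spin -1). *)
Fixpoint cube (n : nat) : list (list bool) :=
  match n with
  | O => [ [] ]
  | S k => flat_map (fun s => [true :: s; false :: s]) (cube k)
  end.

Definition spin (s : list bool) (i : nat) : R :=
  if nth i s false then 1 else -1.

(* A : the sequence of matrices; A n i j is the (i,j) entry of A_n
   (indices 0..n-1; entries outside are irrelevant). *)
Definition matseq := nat -> nat -> nat -> R.

Definition mloc (A : matseq) (n : nat) (s : list bool) (i : nat) : R :=
  rsum n (fun j => A n i j * spin s j).

Definition weight (A : matseq) (n : nat) (beta B : R) (s : list bool) : R :=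
  exp (beta / 2 * rsum n (fun i => spin s i * mloc A n s i)
       + B * rsum n (fun i => spin s i)).

Definition lsum (l : list (list bool)) (f : list bool -> R) : R :=
  fold_right (fun s acc => f s + acc) 0 l.

Definition Zpart (A : matseq) (n : nat) (beta B : R) : R :=
  lsum (cube n) (weight A n beta B).

Definition ising_prob (A : matseq) (n : nat) (beta B : R)
  (E : list bool -> Prop) (Edec : forall s, {E s} + {~ E s}) : R :=
  lsum (cube n) (fun s => if Edec s then weight A n beta B s else 0)
  / Zpart A n beta B.

Definition Tstat (A : matseq) (n : nat) (s : list bool) : R :=
  rsum n (fun i => spin s i * mloc A n s i).

Definition small_event (A : matseq) (n : nat) (delta : R) (s : list bool) : Prop :=
  Rabs (Tstat A n s) < INR n * delta.

Definition small_event_dec (A : matseq) (n : nat) (delta : R) :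
  forall s, {small_event A n delta s} + {~ small_event A n delta s} :=
  fun s => Rlt_dec (Rabs (Tstat A n s)) (INR n * delta).

Definition symmetric_nonneg_zerodiag (A : matseq) : Prop :=
  forall n i j, (i < n)%nat -> (j < n)%nat ->
    A n i j = A n j i /\ 0 <= A n i j /\ A n i i = 0.

Definition cond_C1 (A : matseq) : Prop :=
  exists gamma : R, forall n i, (i < n)%nat -> rsum n (A n i) <= gamma.

(* liminf_n (1/n) sum_{i,j} A_n(i,j) > 0, unfolded *)
Definition cond_C2 (A : matseq) : Prop :=
  exists c : R, 0 < c /\ exists N : nat, forall n : nat, (N <= n)%nat ->
    c < / INR n * rsum n (fun i => rsum n (fun j => A n i j)).

(* Compare the Gibbs measure with the product measure Q of independent spins
   under the field B alone (the case beta = 0), whose partition function is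
   (2 cosh B)^n.  Under Q the spins have mean tanh B and are independent, so
   with a vanishing diagonal E_Q[sum_i X_i m_i] = tanh(B)^2 sum_{i,j} A(i,j),
   which is at least tanh(B)^2 c n by (C2).  Jensen's inequality gives
   Z_n / (2 cosh B)^n = E_Q[exp(beta/2 sum_i X_i m_i)] >= exp(beta/2 tanh(B)^2 c n),
   while the unnormalised mass of {|sum_i X_i m_i| < n delta} is at most
   exp(beta n delta / 2) (2 cosh B)^n.  Taking delta = tanh(B)^2 c / 2 yields
   exponential decay at rate beta tanh(B)^2 c / 4. *)
From Stdlib Require Import Reals Lra Lia List.
Open Scope R_scope.

Fixpoint rprod (n : nat) (f : nat -> R) : R :=
  match n with O => 1 | S k => rprod k f * f k end.

Lemma rsum_ext n f g : (forall i, (i < n)%nat -> f i = g i) -> rsum n f = rsum n g.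
Proof.
  induction n as [|n IH]; intros Hfg; simpl; auto.
  rewrite IH by (intros; apply Hfg; lia). rewrite Hfg by lia. reflexivity.
Qed.

Lemma rprod_ext n f g : (forall i, (i < n)%nat -> f i = g i) -> rprod n f = rprod n g.
Proof.
  induction n as [|n IH]; intros Hfg; simpl; auto.
  rewrite IH by (intros; apply Hfg; lia). rewrite Hfg by lia. reflexivity.
Qed.

Lemma rsum_mult_l c n f : c * rsum n f = rsum n (fun i => c * f i).
Proof. induction n as [|n IH]; simpl; [ring|]. rewrite <- IH. ring. Qed.

Lemma rprod_shift n f : rprod (S n) f = f 0%nat * rprod n (fun i => f (S i)).
Proof. induction n as [|n IH]; simpl in *; [ring|]. rewrite IH. ring. Qed.

Lemma rprod_const n c : rprod n (fun _ => c) = c ^ n.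
Proof. induction n as [|n IH]; simpl; [reflexivity|]. rewrite IH. ring. Qed.

Lemma exp_rsum n f : exp (rsum n f) = rprod n (fun i => exp (f i)).
Proof. induction n as [|n IH]; simpl; [apply exp_0|]. rewrite exp_plus, IH. reflexivity. Qed.

Lemma rprod_mul_at i n a f : (i < n)%nat ->
  rprod n (fun k => (if Nat.eqb k i then a k else 1) * f k) = a i * rprod n f.
Proof.
  induction n as [|n IH]; intros Hi; [lia|]. simpl.
  destruct (Nat.eq_dec i n) as [->|Hin].
  - rewrite Nat.eqb_refl, (rprod_ext n _ f); [ring|].
    intros k Hk. destruct (Nat.eqb_spec k n); [lia|ring].
  - rewrite IH by lia. destruct (Nat.eqb_spec n i); [lia|ring].
Qed.

Lemma lsum_ext l f g : (forall s, f s = g s) -> lsum l f = lsum l g.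
Proof. intros Hfg; induction l as [|s l IH]; simpl; auto. rewrite IH, Hfg. reflexivity. Qed.

Lemma lsum_plus l f g : lsum l (fun s => f s + g s) = lsum l f + lsum l g.
Proof. induction l as [|s l IH]; simpl; [ring|]. rewrite IH. ring. Qed.

Lemma lsum_mult_l l c f : lsum l (fun s => c * f s) = c * lsum l f.
Proof. induction l as [|s l IH]; simpl; [ring|]. rewrite IH. ring. Qed.

Lemma lsum_le l f g : (forall s, f s <= g s) -> lsum l f <= lsum l g.
Proof. intros Hfg; induction l as [|s l IH]; simpl; [lra|]. specialize (Hfg s). lra. Qed.

Lemma lsum_nonneg l f : (forall s, 0 <= f s) -> 0 <= lsum l f.
Proof. intros Hf; induction l as [|s l IH]; simpl; [lra|]. specialize (Hf s). lra. Qed.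

Lemma lsum_rsum l n F :
  lsum l (fun s => rsum n (fun i => F i s)) = rsum n (fun i => lsum l (F i)).
Proof.
  induction n as [|n IH]; simpl.
  - induction l as [|s l IHl]; simpl; [reflexivity|]. rewrite IHl. ring.
  - rewrite lsum_plus, IH. reflexivity.
Qed.

Lemma lsum_cube_succ n F :
  lsum (cube (S n)) F = lsum (cube n) (fun s => F (true :: s) + F (false :: s)).
Proof.
  simpl. induction (cube n) as [|s l IH]; simpl; [reflexivity|]. rewrite IH. ring.
Qed.

Lemma lsum_cube_rprod n (g : nat -> bool -> R) :
  lsum (cube n) (fun s => rprod n (fun i => g i (nth i s false)))
  = rprod n (fun i => g i true + g i false).
Proof.
  revert g; induction n as [|n IH]; intros g; [simpl; ring|].
  rewrite lsum_cube_succ.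
  rewrite (lsum_ext _ _ (fun s => (g 0%nat true + g 0%nat false) *
             rprod n (fun i => g (S i) (nth i s false)))).
  - rewrite lsum_mult_l, (IH (fun i => g (S i))), rprod_shift. reflexivity.
  - intros s. rewrite !rprod_shift. simpl nth. ring.
Qed.

Lemma lsum_jensen_exp l w f :
  (forall s, 0 <= w s) -> 0 < lsum l w ->
  lsum l w * exp (lsum l (fun s => w s * f s) / lsum l w)
  <= lsum l (fun s => w s * exp (f s)).
Proof.
  intros Hw HW.
  set (a := lsum l (fun s => w s * f s) / lsum l w).
  (* tangent line of exp at the mean a *)
  apply Rle_trans with (lsum l (fun s => exp a * w s + exp a * (w s * f s - a * w s))).
  - rewrite lsum_plus, !lsum_mult_l.
    unfold Rminus. rewrite lsum_plus.
    rewrite (lsum_ext _ (fun s => - (a * w s)) (fun s => - a * w s)) by (intros; ring).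
    rewrite lsum_mult_l. unfold a. apply Req_le. field. lra.
  - apply lsum_le. intros s.
    assert (Hexp : exp (f s) = exp a * exp (f s - a)) by (rewrite <- exp_plus; f_equal; ring).
    pose proof (exp_ineq1_le (f s - a)). pose proof (exp_pos a). pose proof (Hw s).
    rewrite Hexp.
    replace (exp a * w s + exp a * (w s * f s - a * w s))
      with (w s * (exp a * (1 + (f s - a)))) by ring.
    apply Rmult_le_compat_l; [lra|]. apply Rmult_le_compat_l; lra.
Qed.

Lemma exp_le_mono x y : x <= y -> exp x <= exp y.
Proof. intros [Hlt|<-]; [left; apply exp_increasing, Hlt | apply Rle_refl]. Qed.

Lemma two_cosh_pos x : 0 < 2 * cosh x.
Proof. unfold cosh. pose proof (exp_pos x). pose proof (exp_pos (- x)). lra. Qed.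

Lemma tanh_neq_0 x : x <> 0 -> tanh x <> 0.
Proof.
  intros Hx Ht. pose proof (two_cosh_pos x).
  assert (Hs : sinh x = 0) by (unfold tanh in Ht; apply (Rmult_eq_reg_r (/ cosh x));
    [unfold Rdiv in Ht; lra | apply Rinv_neq_0_compat; lra]).
  destruct (Rtotal_order x 0) as [Hlt|[Heq|Hgt]]; [| contradiction |].
  - pose proof (sinh_lt _ _ Hlt). rewrite sinh_0 in *. lra.
  - pose proof (sinh_lt _ _ Hgt). rewrite sinh_0 in *. lra.
Qed.

Section ProductMeasure.

Variable B : R.

Definition field_weight (n : nat) (s : list bool) : R := exp (B * rsum n (spin s)).

Definition site_weight (b : bool) : R := exp (if b then B else - B).

Definition sign (b : bool) : R := if b then 1 else -1.

Lemma field_weight_rprod n s :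
  field_weight n s = rprod n (fun k => site_weight (nth k s false)).
Proof.
  unfold field_weight. rewrite rsum_mult_l, exp_rsum. apply rprod_ext. intros k _.
  unfold spin, site_weight. destruct (nth k s false); f_equal; ring.
Qed.

Lemma lsum_field_weight n : lsum (cube n) (field_weight n) = (2 * cosh B) ^ n.
Proof.
  rewrite (lsum_ext _ _ _ (field_weight_rprod n)), (lsum_cube_rprod n (fun _ => site_weight)).
  rewrite <- rprod_const. apply rprod_ext. intros k _. unfold site_weight, cosh. field.
Qed.

Lemma lsum_field_weight_spin_spin n i j :
  (i < n)%nat -> (j < n)%nat -> i <> j ->
  lsum (cube n) (fun s => field_weight n s * (spin s i * spin s j))
  = tanh B ^ 2 * (2 * cosh B) ^ n.
Proof.
  intros Hi Hj Hij.
  set (g := fun k b => (if Nat.eqb k i then sign b else 1) *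
                       ((if Nat.eqb k j then sign b else 1) * site_weight b)).
  rewrite (lsum_ext _ _ (fun s => rprod n (fun k => g k (nth k s false)))).
  2:{ intros s. unfold g.
      rewrite (rprod_mul_at i n (fun k => sign (nth k s false))) by assumption.
      rewrite (rprod_mul_at j n (fun k => sign (nth k s false))) by assumption.
      rewrite field_weight_rprod. unfold spin, sign. ring. }
  rewrite lsum_cube_rprod.
  pose proof (two_cosh_pos B).
  rewrite (rprod_ext n _ (fun k => (if Nat.eqb k i then tanh B else 1) *
             ((if Nat.eqb k j then tanh B else 1) * (2 * cosh B)))).
  2:{ intros k _. unfold g, sign, site_weight, tanh, sinh, cosh.
      destruct (Nat.eqb_spec k i), (Nat.eqb_spec k j); try lia;
        unfold cosh in *; field; lra. }
  rewrite (rprod_mul_at i n (fun _ => tanh B)) by assumption.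
  rewrite (rprod_mul_at j n (fun _ => tanh B)) by assumption.
  rewrite rprod_const. ring.
Qed.

Lemma lsum_field_weight_Tstat (A : matseq) n :
  (forall i, (i < n)%nat -> A n i i = 0) ->
  lsum (cube n) (fun s => field_weight n s * Tstat A n s)
  = tanh B ^ 2 * rsum n (fun i => rsum n (A n i)) * (2 * cosh B) ^ n.
Proof.
  intros Hdiag.
  rewrite (lsum_ext _ _ (fun s => rsum n (fun i => rsum n (fun j =>
             A n i j * (field_weight n s * (spin s i * spin s j)))))).
  2:{ intros s. unfold Tstat, mloc. rewrite rsum_mult_l. apply rsum_ext. intros i _.
      rewrite !rsum_mult_l. apply rsum_ext. intros j _. ring. }
  set (c := tanh B ^ 2 * (2 * cosh B) ^ n).
  replace (tanh B ^ 2 * rsum n (fun i => rsum n (A n i)) * (2 * cosh B) ^ n)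
    with (c * rsum n (fun i => rsum n (A n i))) by (unfold c; ring).
  rewrite rsum_mult_l.
  rewrite (rsum_ext n _ (fun i => rsum n (fun j => c * A n i j)))
    by (intros; apply rsum_mult_l).
  rewrite lsum_rsum. apply rsum_ext. intros i Hi.
  rewrite lsum_rsum. apply rsum_ext. intros j Hj.
  rewrite lsum_mult_l.
  destruct (Nat.eq_dec i j) as [<-|Hij].
  - rewrite Hdiag by assumption. ring.
  - rewrite lsum_field_weight_spin_spin by assumption. unfold c. ring.
Qed.

End ProductMeasure.

Lemma weight_field_weight A n beta B s :
  weight A n beta B s = field_weight B n s * exp (beta / 2 * Tstat A n s).
Proof. unfold weight, field_weight, Tstat. rewrite <- exp_plus. f_equal. apply Rplus_comm. Qed.

Lemma Zpart_ge_exp_mean A n beta B :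
  (forall i, (i < n)%nat -> A n i i = 0) ->
  exp (beta / 2 * (tanh B ^ 2 * rsum n (fun i => rsum n (A n i)))) * (2 * cosh B) ^ n
  <= Zpart A n beta B.
Proof.
  intros Hdiag. pose proof (pow_lt _ n (two_cosh_pos B)).
  unfold Zpart. rewrite (lsum_ext _ _ _ (weight_field_weight A n beta B)).
  eapply Rle_trans; [|apply lsum_jensen_exp].
  - rewrite lsum_field_weight, Rmult_comm.
    rewrite (lsum_ext _ _ (fun s => beta / 2 * (field_weight B n s * Tstat A n s)))
      by (intros; ring).
    rewrite lsum_mult_l, lsum_field_weight_Tstat by assumption.
    apply Req_le. f_equal. f_equal. field. lra.
  - intros s. left. apply exp_pos.
  - rewrite lsum_field_weight. assumption.
Qed.

Lemma small_event_mass_le A n beta B delta : 0 <= beta ->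
  lsum (cube n) (fun s => if small_event_dec A n delta s then weight A n beta B s else 0)
  <= exp (beta / 2 * (INR n * delta)) * (2 * cosh B) ^ n.
Proof.
  intros Hbeta. rewrite <- lsum_field_weight, <- lsum_mult_l. apply lsum_le. intros s.
  pose proof (exp_pos (beta / 2 * (INR n * delta))).
  assert (Hw : 0 < field_weight B n s) by apply exp_pos.
  destruct (small_event_dec A n delta s) as [Hs|Hs]; [|nra].
  rewrite weight_field_weight, Rmult_comm. apply Rmult_le_compat_r; [lra|].
  apply exp_le_mono, Rmult_le_compat_l; [lra|].
  unfold small_event in Hs. pose proof (Rle_abs (Tstat A n s)). lra.
Qed.

Lemma ising_prob_small_event_le A n beta B delta :
  0 <= beta -> (forall i, (i < n)%nat -> A n i i = 0) ->
  ising_prob A n beta B (small_event A n delta) (small_event_dec A n delta)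
  <= exp (beta / 2 * (INR n * delta - tanh B ^ 2 * rsum n (fun i => rsum n (A n i)))).
Proof.
  intros Hbeta Hdiag.
  set (a := beta / 2 * (tanh B ^ 2 * rsum n (fun i => rsum n (A n i)))).
  set (Q := (2 * cosh B) ^ n).
  assert (HQ : 0 < Q) by apply pow_lt, two_cosh_pos.
  assert (HZ : 0 < exp a * Q) by (pose proof (exp_pos a); nra).
  assert (Hmass_nonneg : 0 <= lsum (cube n) (fun s =>
            if small_event_dec A n delta s then weight A n beta B s else 0)).
  { apply lsum_nonneg. intros s. destruct (small_event_dec A n delta s);
      [left; apply exp_pos | apply Rle_refl]. }
  unfold ising_prob, Rdiv.
  apply Rle_trans with (exp (beta / 2 * (INR n * delta)) * Q * / (exp a * Q)).
  - apply Rmult_le_compat; auto.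
    + left. apply Rinv_0_lt_compat. apply Rlt_le_trans with (1 := HZ), Zpart_ge_exp_mean, Hdiag.
    + apply small_event_mass_le, Hbeta.
    + apply Rinv_le_contravar, Zpart_ge_exp_mean, Hdiag. exact HZ.
  - apply Req_le. replace (beta / 2 * (INR n * delta - _)) with (beta / 2 * (INR n * delta) + - a)
      by (unfold a; ring).
    rewrite exp_plus, exp_Ropp. field. split; [apply Rgt_not_eq, exp_pos | lra].
Qed.

Lemma Rinv_mult_lt_le c x S : 0 < x -> c < / x * S -> c * x <= S.
Proof.
  intros Hx HS. apply Rmult_lt_compat_l with (r := x) in HS; [|exact Hx].
  rewrite <- Rmult_assoc, Rinv_r in HS by lra. lra.
Qed.

Theorem lemma2 (A : matseq)
  (hA : symmetric_nonneg_zerodiag A) (hC1 : cond_C1 A) (hC2 : cond_C2 A)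
  (beta0 B0 : R) (hbeta : 0 < beta0) (hB : B0 <> 0) :
  exists delta : R, 0 < delta /\
    exists eps : R, 0 < eps /\ exists N : nat, forall n : nat, (N <= n)%nat ->
      ising_prob A n beta0 B0 (small_event A n delta) (small_event_dec A n delta)
        <= exp (- eps * INR n).
Proof.
  destruct hC2 as [c [hc [N HN]]].
  set (t2 := tanh B0 ^ 2).
  assert (Ht2 : 0 < t2) by (pose proof (tanh_neq_0 _ hB); unfold t2; simpl; nra).
  exists (t2 * c / 2). split; [nra|].
  exists (beta0 * t2 * c / 4). split; [assert (0 < t2 * c) by nra; nra|].
  exists N. intros n Hn.
  set (SA := rsum n (fun i => rsum n (A n i))).
  assert (HSA : c * INR n <= SA).
  { destruct n as [|m]; [unfold SA; simpl; lra|].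
    apply Rinv_mult_lt_le, HN, Hn. apply lt_0_INR. lia. }
  eapply Rle_trans; [apply ising_prob_small_event_le; [lra|]|].
  - intros i Hi. apply (hA n i i Hi Hi).
  - apply exp_le_mono. fold t2 SA.
    assert (0 <= beta0 * t2 * (SA - c * INR n)) by (apply Rmult_le_pos; nra).
    nra.
Qed.
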